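(* Let $m$ be a natural number with $m>3$. If there exists a natural number $n$ such that the $n$-th term $G(n,m)$ of the Goodstein sequence $G(m)$ is $0$, then there is some $k<n$ such that $G(k,m)<G(k-1,m)$.
   Context: For a natural number base $b>1$, the hereditary representation $m\langle b\rangle$ of $m$ is $\sum_{i=0}^{l} a_i b^{i}$ with $0\le a_i<b$, $a_l\ne0$, each exponent itself written in hereditary representation in base $b$, recursively. $m\langle b\rangle''$ is obtained by syntactically replacing every $b$ by $b+1$ in $m\langle b\rangle$. The Goodstein sequence $G(m)=\{m, m''-1, (m''-1)''-1,\dots\}$ starts from $m$ in base $2$; its $n$-th term is $G(n,m)$, with $G(1,m)=m$ in base $2$, $G(k,m)$ written in base $k+1$, and $G(k+1,m)=G(k,m)\langle k+1\rangle''-1$. *)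

From mathcomp Require Import all_boot.
Set Implicit Arguments. Unset Strict Implicit. Unset Printing Implicit Defensive.

Definition digit (b n i : nat) : nat := (n %/ b ^ i) %% b.

Fixpoint hbump_fuel (fuel b n : nat) : nat :=
  match fuel with
  | 0 => 0
  | f.+1 => sumn [seq (if digit b n i is 0 then 0
                   else digit b n i * (b.+1) ^ (hbump_fuel f b i)) | i <- iota 0 n.+1]
  end.

(* m<b>'' : replace every b by b+1 in the hereditary base-b representation.
   Fuel n.+1 suffices for b >= 2 (nonzero digits only at exponents i < n). *)
Definition hbump (b n : nat) : nat := hbump_fuel n.+1 b n.

(* goodstein m k = G(k, m) for k >= 1; G(1,m)=m (base 2),
   G(k+1,m) = G(k,m)<k+1>'' - 1.  Index 0 is a dummy value (= m). *)
Fixpoint goodstein (m k : nat) : nat :=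
  match k with
  | 0 => m
  | k'.+1 => if k' is 0 then m else hbump k'.+1 (goodstein m k') - 1
  end.

(* If G(n, m) = 0 then G(n - 1, m) <= 1, because bumping the base never sends
   a number x >= 2 below 2: the leading term a (b+1)^e of its hereditary
   expansion is at least 2, either as a digit a = x >= 2 (when x < b) or as a
   power (b+1)^e with e >= 1.  Had the sequence never decreased from index 2
   to index n - 1, it would stay above G(1, m) = m > 1. *)

From mathcomp Require Import all_boot.

Set Implicit Arguments.
Unset Strict Implicit.
Unset Printing Implicit Defensive.

Lemma leq_sumn_map (F : nat -> nat) (s : seq nat) (t : nat) :
  t \in s -> F t <= sumn [seq F i | i <- s].
Proof.
elim: s => [|a s IHs] //=; rewrite inE => /orP[/eqP-> | /IHs le_Ft].
  exact: leq_addr.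
exact: leq_trans le_Ft (leq_addl _ _).
Qed.

Lemma digit_trunc_log_gt0 (b x : nat) : 1 < b -> 0 < x ->
  0 < digit b x (trunc_log b x).
Proof.
move=> b_gt1 x_gt0; have bX_gt0 : 0 < b ^ trunc_log b x by rewrite expn_gt0 ltnW.
have lt_quo_b : x %/ b ^ trunc_log b x < b.
  by rewrite ltn_divLR // -expnS trunc_log_ltn.
by rewrite /digit modn_small // divn_gt0 // trunc_logP.
Qed.

Lemma trunc_log_leq (b x : nat) : 1 < b -> 0 < x -> trunc_log b x <= x.
Proof.
move=> b_gt1 x_gt0; apply: leq_trans (trunc_logP b_gt1 x_gt0).
exact/ltnW/ltn_expl.
Qed.

Lemma hbump_fuelS (f b x : nat) :
  hbump_fuel f.+1 b x =
    sumn [seq (if digit b x i is 0 then 0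
               else digit b x i * b.+1 ^ hbump_fuel f b i) | i <- iota 0 x.+1].
Proof. by []. Qed.

Lemma leq_digit_hbump_fuel (f b x i : nat) : i <= x ->
  digit b x i * b.+1 ^ hbump_fuel f b i <= hbump_fuel f.+1 b x.
Proof.
move=> le_ix; have i_in : i \in iota 0 x.+1 by rewrite mem_iota add0n ltnS.
rewrite hbump_fuelS; apply: leq_trans (leq_sumn_map _ i_in).
by case: (digit b x i).
Qed.

Lemma hbump_fuel_gt0 (f b x : nat) : 1 < b -> 0 < x -> 0 < hbump_fuel f.+1 b x.
Proof.
move=> b_gt1 x_gt0.
apply: leq_trans (leq_digit_hbump_fuel f b (trunc_log_leq b_gt1 x_gt0)).
by rewrite muln_gt0 digit_trunc_log_gt0 ?expn_gt0.
Qed.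

Lemma hbump_gt1 (b x : nat) : 1 < b -> 1 < x -> 1 < hbump b x.
Proof.
move=> b_gt1 x_gt1; have x_gt0 := ltnW x_gt1.
apply: leq_trans (leq_digit_hbump_fuel x b (trunc_log_leq b_gt1 x_gt0)).
have digit_gt0 := digit_trunc_log_gt0 b_gt1 x_gt0.
case t_eq: (trunc_log b x) digit_gt0 => [|t] digit_gt0.
  have x_ltb : x < b by have := trunc_log_ltn x b_gt1; rewrite t_eq expn1.
  rewrite /digit expn0 divn1 modn_small //.
  by apply: leq_trans x_gt1 (leq_pmulr _ _); rewrite expn_gt0.
apply: leq_trans (leq_pmull _ digit_gt0).
have hbump_t_gt0 : 0 < hbump_fuel x b t.+1.
  by rewrite -(prednK x_gt0) hbump_fuel_gt0.
apply: leq_trans (leq_pexp2l (ltn0Sn b) hbump_t_gt0).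
by rewrite expnS expn0 muln1 ltnS ltnW.
Qed.

Lemma descent_or_leq (u : nat -> nat) (i j : nat) : i <= j ->
  (exists2 k, i < k <= j & u k < u k.-1) \/ u i <= u j.
Proof.
elim: j => [|j IHj]; first by rewrite leqn0 => /eqP->; right.
rewrite leq_eqVlt => /orP[/eqP-> | le_ij]; first by right.
have [desc_j | le_j] := ltnP (u j.+1) (u j).
  by left; exists j.+1; rewrite ?le_ij ?leqnn.
have [[k /andP[lt_ik le_kj] desc_k] | le_uij] := IHj le_ij.
  by left; exists k; rewrite // lt_ik leqW.
by right; exact: leq_trans le_uij le_j.
Qed.

Lemma goodstein_leq1_of_next0 (m n : nat) :
  goodstein m n.+2 = 0 -> goodstein m n.+1 <= 1.
Proof.
move=> next0; rewrite leqNgt; apply/negP => /(hbump_gt1 (isT : 1 < n.+2)).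
by rewrite -subn_gt0 -[_ - 1]/(goodstein m n.+2) next0.
Qed.

Theorem lemma1 (m : nat) : 3 < m ->
  forall n : nat, goodstein m n = 0 ->
    exists k : nat, 2 <= k < n /\ goodstein m k < goodstein m k.-1.
Proof.
move=> m_gt3 [|[|n]] G0; try by move: G0 m_gt3 => /= ->.
have [[k /andP[k_gt1 le_kn] desc_k] | le_mG] :=
  descent_or_leq (goodstein m) (isT : 1 <= n.+1).
  by exists k; rewrite k_gt1 ltnS.
have := leq_trans le_mG (goodstein_leq1_of_next0 G0).
by rewrite /= leqNgt (ltn_trans _ m_gt3).
Qed.
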